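(* Let $V$ be a finite set, $A,B\subseteq V$, ${\bf t}=(t_i)_{i\in V}$ and $\lambda$ complex numbers. Then $$\int\mathcal{D}_{B,{\bf t}}(\psi,\bar\psi)\,f_A^{(\lambda)}=\Big(\prod_{i\in B\setminus A}t_i\Big)\Big[f_{A\setminus B}^{(\lambda)}+\Big(\sum_{i\in B\cap A}(t_i-\lambda)\Big)\tau_{A\setminus B}\Big].$$ In particular, $\int\mathcal{D}_{A,{\bf t}}(\psi,\bar\psi)\,f_A^{(\lambda)}=\lambda+\sum_{i\in A}(t_i-\lambda)$.
   Context: For each $i\in V$ let $\psi_i,\bar\psi_i$ be anticommuting generators of a Grassmann algebra over $\mathbb{C}$; $\tau_A=\prod_{i\in A}\bar\psi_i\psi_i$ ($\tau_\emptyset=1$); $f_A^{(\lambda)}=\lambda(1-|A|)\tau_A+\sum_{i\in A}\tau_{A\setminus\{i\}}-\sum_{i,j\in A,\ i\neq j}\bar\psi_i\psi_j\,\tau_{A\setminus\{i,j\}}$ (so $f_\emptyset^{(\lambda)}=\lambda$). For $B\subseteq V$, $\mathcal{D}_{B,{\bf t}}(\psi,\bar\psi)=\prod_{i\in B}d\psi_i\,d\bar\psi_i\,e^{t_i\bar\psi_i\psi_i}$, integrating only over the variables at vertices of $B$, with Berezin conventions $\int d\psi_i\,d\bar\psi_i\,\bar\psi_i\psi_i=1$ and the integral of $1,\psi_i,\bar\psi_i$ equal to $0$. *)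

From HB Require Import structures.
From mathcomp Require Import all_boot all_order all_algebra.
Set Implicit Arguments. Unset Strict Implicit. Unset Printing Implicit Defensive.
Import Order.TTheory GRing.Theory Num.Theory.
Local Open Scope ring_scope.

Section Grassmann.
Variable (K : fieldType) (V : finType).

(* generators: (false, i) is psi_i, (true, i) is psibar_i *)
Definition gen := (bool * V)%type.

(* elements of the Grassmann algebra: coefficient of each monomial
   e_S = product of the generators of S in increasing enum_rank order *)
Definition grass := {ffun {set gen} -> K}.

Definition gzero : grass := [ffun _ => 0].
Definition gadd (F G : grass) : grass := [ffun S => F S + G S].
Definition gscale (c : K) (F : grass) : grass := [ffun S => c * F S].
Definition gmono (S : {set gen}) : grass := [ffun U => (U == S)%:R].
Definition gone : grass := gmono set0.
Definition gconst (c : K) : grass := gscale c gone.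

(* sign of e_S e_T = sign * e_(S u T) for disjoint S, T *)
Definition gsign (S T : {set gen}) : K :=
  (-1) ^+ #|[set p : gen * gen | (p.1 \in S) && (p.2 \in T)
                                 && (enum_rank p.2 < enum_rank p.1)%N]|.

Definition gmul (F G : grass) : grass :=
  [ffun U => \sum_(S : {set gen}) \sum_(T : {set gen})
      (if [disjoint S & T] && (S :|: T == U) then gsign S T * F S * G T else 0)].

Definition psi (i : V) : grass := gmono [set (false, i)].
Definition psibar (i : V) : grass := gmono [set (true, i)].

(* exponential (a finite sum since all relevant elements are nilpotent;
   the sum is taken up to the total number of generators) *)
Definition gexp (F : grass) : grass :=
  \big[gadd/gzero]_(k < (#|{: gen}|).+1)
     gscale (k`!%:R)^-1 (iter k (gmul F) gone).

Definition tau (A : {set V}) : grass :=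
  \big[gmul/gone]_(i in A) gmul (psibar i) (psi i).

Definition fA (lam : K) (A : {set V}) : grass :=
  gadd (gadd (gscale (lam * (1 - (#|A|)%:R)) (tau A))
             (\big[gadd/gzero]_(i in A) tau (A :\ i)))
       (gscale (-1) (\big[gadd/gzero]_(i in A) \big[gadd/gzero]_(j in A | j != i)
                       gmul (gmul (psibar i) (psi j)) (tau (A :\ i :\ j)))).

(* Berezin integral  int dpsi_i dpsibar_i : the linear map sending
   (psibar_i psi_i) * e_S' to e_S' for monomials S' not involving i,
   and killing monomials not containing both psi_i and psibar_i.
   Writing e_S = c * (psibar_i psi_i) * e_S' with c = +-1, the coefficient
   c is the coefficient of e_S in (psibar_i psi_i) e_S' (c = c^-1). *)
Definition pairset (i : V) : {set gen} := [set (false, i); (true, i)].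

Definition berezin1 (i : V) (F : grass) : grass :=
  \big[gadd/gzero]_(S : {set gen} | pairset i \subset S)
     gscale (F S * gmul (gmul (psibar i) (psi i)) (gmono (S :\: pairset i)) S)
            (gmono (S :\: pairset i)).

(* int D_{B,t} F = prod_{i in B} int dpsi_i dpsibar_i e^{t_i psibar_i psi_i} F,
   integrating only over the variables at vertices of B *)
Definition berezinD (B : {set V}) (t : V -> K) (F : grass) : grass :=
  foldr (fun i G => berezin1 i (gmul (gexp (gscale (t i) (gmul (psibar i) (psi i)))) G))
        F (enum B).

End Grassmann.

Arguments gzero {K V}. Arguments gadd {K V}. Arguments gscale {K V}.
Arguments gmono {K V}. Arguments gone {K V}. Arguments gconst {K V}.
Arguments gsign {K V}. Arguments gmul {K V}. Arguments psi {K V}.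
Arguments psibar {K V}. Arguments gexp {K V}. Arguments tau {K V}.
Arguments fA {K V}. Arguments pairset {V}. Arguments berezin1 {K V}.
Arguments berezinD {K V}.

From HB Require Import structures.
From mathcomp Require Import all_boot all_order all_algebra ring.
From mathcomp Require Import complex reals.
Set Implicit Arguments. Unset Strict Implicit. Unset Printing Implicit Defensive.
Import Order.TTheory GRing.Theory Num.Theory.
Local Open Scope ring_scope.

(* The even element psibar_k psi_k is central and squares to zero, so
   e^(t psibar_k psi_k) = 1 + t psibar_k psi_k and the weighted integral over a
   vertex k is F |-> int F + t int psibar_k psi_k F.  It multiplies elements not
   involving k by t, sends psibar_k psi_k G to G, and kills every monomial
   containing exactly one of psi_k, psibar_k.  Hence it sends tau_A to tau_(A\k)
   for k in A and to t tau_A otherwise, and in f_A the terms psibar_i psi_j with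
   exactly one of i, j equal to k disappear.  This gives the one-vertex recursion
   int_k f_A = f_(A\k) + (t_k - lambda) tau_(A\k) for k in A, which is iterated
   over the vertices of B. *)

Lemma disjointsP (T : finType) (A B : {set T}) :
  reflect (forall x, x \in A -> x \in B -> False) [disjoint A & B].
Proof.
rewrite -setI_eq0; apply: (iffP eqP) => [AB0 x xA xB | AB].
  by have := in_set0 x; rewrite -AB0 inE xA xB.
by apply/setP => x; rewrite !inE; apply/andP => -[/AB].
Qed.

Lemma disjointsUl (T : finType) (A B C : {set T}) :
  [disjoint A :|: B & C] = [disjoint A & C] && [disjoint B & C].
Proof. by rewrite -!setI_eq0 setIUl setU_eq0. Qed.

Lemma disjointsUr (T : finType) (A B C : {set T}) :
  [disjoint A & B :|: C] = [disjoint A & B] && [disjoint A & C].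
Proof. by rewrite -!setI_eq0 setIUr setU_eq0. Qed.

Lemma disjoint0s (T : finType) (A : {set T}) : [disjoint set0 & A].
Proof. by rewrite -setI_eq0 set0I. Qed.

Lemma cardsU_disjoint (T : finType) (A B : {set T}) :
  [disjoint A & B] -> #|A :|: B| = (#|A| + #|B|)%N.
Proof. by move=> AB; apply/eqP; rewrite (leq_card_setU A B).2. Qed.

Lemma setD1C (T : finType) (A : {set T}) (x y : T) : A :\ x :\ y = A :\ y :\ x.
Proof. by apply/setP => z; rewrite !in_setD1 andbCA. Qed.

Section Grassmann.
Variables (K : fieldType) (V : finType).
Implicit Types (F G H : grass K V) (S T U W X : {set gen V}) (c t lam : K).
Implicit Types (i j k : V) (A : {set V}).

(* The scaling of [{ffun _ -> K^o}] is [gscale], so this K-module structure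
   identifies [gscale c F] with [c *: F] by conversion. *)
HB.instance Definition _ := GRing.Zmodule.copy (grass K V) {ffun {set gen V} -> K}.
HB.instance Definition _ := GRing.Zmodule_isLmodule.Build K (grass K V)
  (@scalerA K {ffun {set gen V} -> K^o}) (@scale1r K {ffun {set gen V} -> K^o})
  (@scalerDr K {ffun {set gen V} -> K^o}) (@scalerDl K {ffun {set gen V} -> K^o}).

Lemma gaddE F G : gadd F G = F + G. Proof. by []. Qed.
Lemma gscaleE c F : gscale c F = c *: F. Proof. by []. Qed.

Lemma gbigE (I : Type) (r : seq I) (P : pred I) (Fi : I -> grass K V) :
  \big[gadd/gzero]_(i <- r | P i) Fi i = \sum_(i <- r | P i) Fi i.
Proof. by []. Qed.

Lemma coefD F G S : (F + G) S = F S + G S. Proof. by rewrite ffunE. Qed.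
Lemma coefZ c F S : (c *: F) S = c * F S. Proof. by rewrite ffunE. Qed.
Lemma coefN F S : (- F) S = - F S. Proof. by rewrite ffunE. Qed.

Lemma grass_expand F : F = \sum_S F S *: gmono S.
Proof.
apply/ffunP => U; rewrite sum_ffunE (bigD1 U) //= big1 => [|S /negbTE SU].
  by rewrite coefZ ffunE eqxx mulr1 addr0.
by rewrite coefZ ffunE eq_sym SU mulr0.
Qed.

Lemma gmulDl F G H : gmul (F + G) H = gmul F H + gmul G H.
Proof.
apply/ffunP => U; rewrite !ffunE -big_split; apply: eq_bigr => S _.
rewrite -big_split; apply: eq_bigr => T _; rewrite ?coefD.
by case: ifP => _; rewrite /= ?addr0 // mulrDr mulrDl.
Qed.

Lemma gmulDr F G H : gmul F (G + H) = gmul F G + gmul F H.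
Proof.
apply/ffunP => U; rewrite !ffunE -big_split; apply: eq_bigr => S _.
rewrite -big_split; apply: eq_bigr => T _; rewrite ?coefD.
by case: ifP => _; rewrite /= ?addr0 // mulrDr.
Qed.

Lemma gmulZl c F G : gmul (c *: F) G = c *: gmul F G.
Proof.
apply/ffunP => U; rewrite coefZ !ffunE mulr_sumr; apply: eq_bigr => S _.
rewrite mulr_sumr; apply: eq_bigr => T _; rewrite coefZ.
by case: ifP => _; rewrite ?mulr0 // mulrCA !mulrA.
Qed.

Lemma gmulZr c F G : gmul F (c *: G) = c *: gmul F G.
Proof.
apply/ffunP => U; rewrite coefZ !ffunE mulr_sumr; apply: eq_bigr => S _.
rewrite mulr_sumr; apply: eq_bigr => T _; rewrite coefZ.
by case: ifP => _; rewrite ?mulr0 // mulrCA !mulrA.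
Qed.

Lemma gmul0l F : gmul 0 F = 0.
Proof. by rewrite -[in LHS](scale0r 0) gmulZl scale0r. Qed.

Lemma gmul0r F : gmul F 0 = 0.
Proof. by rewrite -[in LHS](scale0r 0) gmulZr scale0r. Qed.

Lemma gmul_suml (I : Type) (r : seq I) (P : pred I) (Fi : I -> grass K V) G :
  gmul (\sum_(i <- r | P i) Fi i) G = \sum_(i <- r | P i) gmul (Fi i) G.
Proof. exact: (big_morph (gmul^~ G) (fun F1 F2 => gmulDl F1 F2 G) (gmul0l G)). Qed.

Lemma gmul_sumr (I : Type) (r : seq I) (P : pred I) (Fi : I -> grass K V) G :
  gmul G (\sum_(i <- r | P i) Fi i) = \sum_(i <- r | P i) gmul G (Fi i).
Proof. exact: (big_morph (gmul G) (gmulDr G) (gmul0r G)). Qed.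

Lemma gmul_mono S T :
  gmul (gmono S) (gmono T) =
    if [disjoint S & T] then gsign S T *: gmono (S :|: T) else 0.
Proof.
apply/ffunP => U; rewrite ffunE (bigD1 S) //= [X in _ + X]big1 => [|X /negbTE XS].
  rewrite addr0 (bigD1 T) //= [X in _ + X]big1 => [|Y /negbTE YT]; last first.
    by rewrite !ffunE YT !mulr0; case: ifP.
  rewrite !ffunE !eqxx !mulr1 !addr0; have [ST | _] /= := boolP [disjoint S & T].
    by rewrite coefZ ffunE eq_sym; case: (_ == _); rewrite ?mulr1 ?mulr0.
  by rewrite ffunE.
by rewrite big1 // => Y _; rewrite ffunE XS mulr0 mul0r; case: ifP.
Qed.

Lemma gsign_sq S T : gsign S T * gsign S T = 1 :> K.
Proof. by rewrite -exprD -signr_odd oddD addbb. Qed.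

Lemma gsign0l T : gsign set0 T = 1 :> K.
Proof.
by rewrite /gsign (_ : [set _ | _] = set0) ?cards0 //; apply/setP => p; rewrite !inE.
Qed.

Lemma gsign0r T : gsign T set0 = 1 :> K.
Proof.
by rewrite /gsign (_ : [set _ | _] = set0) ?cards0 //; apply/setP => p; rewrite !inE andbF.
Qed.

Lemma gsignUl S T W : [disjoint S & T] ->
  gsign (S :|: T) W = gsign S W * gsign T W :> K.
Proof.
move=> ST; rewrite /gsign -exprD -cardsU_disjoint.
  by congr (_ ^+ _); apply: eq_card => p; rewrite !inE -!andbA -andb_orl.
apply/disjointsP => p; rewrite !inE => /andP[/andP[pS _] _] /andP[/andP[pT _] _].
exact: (disjointsP _ _ ST _ pS pT).
Qed.

Lemma gsignUr S T W : [disjoint T & W] ->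
  gsign S (T :|: W) = gsign S T * gsign S W :> K.
Proof.
move=> TW; rewrite /gsign -exprD -cardsU_disjoint.
  congr (_ ^+ _); apply: eq_card => p; rewrite !inE.
  by case: (p.1 \in S); rewrite //= -andb_orl.
apply/disjointsP => p; rewrite !inE => /andP[/andP[_ pT] _] /andP[/andP[_ pW] _].
exact: (disjointsP _ _ TW _ pT pW).
Qed.

(* Every pair of distinct generators is an inversion of exactly one of the two
   orders, whence the sign rule e_T e_S = (-1)^(|S||T|) e_S e_T. *)
Lemma gsignC S T : [disjoint S & T] ->
  gsign S T * gsign T S = (-1) ^+ (#|S| * #|T|) :> K.
Proof.
move=> ST; rewrite /gsign -exprD mulnC -cardsX; congr (_ ^+ _).
pose swap (p : gen V * gen V) := (p.2, p.1).
have swapK : involutive swap by case.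
rewrite -(card_preimset _ (inv_inj swapK)) -cardsU_disjoint.
  apply: eq_card => -[a b]; rewrite !inE /=.
  case aT: (a \in T); case bS: (b \in S); rewrite ?andbF //=.
  case: (ltngtP (enum_rank b) (enum_rank a)) => // /val_inj/enum_rank_inj ba.
  by have := disjointFr ST bS; rewrite ba aT.
apply/disjointsP => -[a b]; rewrite !inE /= => /andP[_ ba] /andP[_ ab].
by have := ltn_trans ba ab; rewrite ltnn.
Qed.

Lemma gmul_monoA S T W :
  gmul (gmul (gmono S) (gmono T)) (gmono W) =
  gmul (gmono S) (gmul (gmono T) (gmono W)) :> grass K V.
Proof.
rewrite !gmul_mono.
case ST: [disjoint S & T]; case TW: [disjoint T & W];
  rewrite ?gmulZl ?gmulZr ?gmul0l ?gmul0r ?gmul_mono ?disjointsUl ?disjointsUr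
          ?ST ?TW ?andbF ?scaler0 //.
case SW: [disjoint S & W]; rewrite ?scaler0 // !scalerA setUA.
by rewrite gsignUl // gsignUr //; congr (_ *: _); ring.
Qed.

Lemma gmulA F G H : gmul (gmul F G) H = gmul F (gmul G H).
Proof.
rewrite (grass_expand F) !gmul_suml; apply: eq_bigr => S _; rewrite !gmulZl.
rewrite (grass_expand G) gmul_sumr !gmul_suml gmul_sumr; congr (_ *: _).
apply: eq_bigr => T _; rewrite gmulZr !gmulZl !gmulZr; congr (_ *: _).
rewrite (grass_expand H) !gmul_sumr; apply: eq_bigr => W _.
by rewrite !gmulZr gmul_monoA.
Qed.

Lemma gmul1l F : gmul gone F = F.
Proof.
rewrite [in LHS](grass_expand F) gmul_sumr [in RHS](grass_expand F).
apply: eq_bigr => S _.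
by rewrite gmulZr gmul_mono disjoint0s scalerA gsign0l mulr1 set0U.
Qed.

Lemma gmul1r F : gmul F gone = F.
Proof.
rewrite [in LHS](grass_expand F) gmul_suml [in RHS](grass_expand F).
apply: eq_bigr => S _.
by rewrite gmulZl gmul_mono disjoint_sym disjoint0s scalerA gsign0r mulr1 setU0.
Qed.

Lemma gmul_even_monoC S F : ~~ odd #|S| -> gmul (gmono S) F = gmul F (gmono S).
Proof.
move=> evenS; rewrite (grass_expand F) gmul_sumr gmul_suml; apply: eq_bigr => T _.
rewrite gmulZr gmulZl !gmul_mono disjoint_sym; case: ifP => // ST; congr (_ *: _).
rewrite setUC; congr (_ *: _).
have := gsignC ST; rewrite -signr_odd oddM (negbTE evenS) andbF expr0 => signC.
by rewrite -[RHS]mulr1 -(gsign_sq S T) mulrA signC mul1r.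
Qed.

Definition tau1 k : grass K V := gmul (psibar k) (psi k).

Lemma tauE A : tau A = \big[gmul/gone]_(i in A) tau1 i.
Proof. by []. Qed.

Lemma pairsetE k : pairset k = [set (true, k)] :|: [set (false, k)].
Proof. by apply/setP => x; rewrite !inE orbC. Qed.

Lemma psi_pairset k : (false, k) \in pairset k.
Proof. by rewrite !inE eqxx. Qed.

Lemma psibar_pairset k : (true, k) \in pairset k.
Proof. by rewrite !inE eqxx orbT. Qed.

Lemma tau1E k : tau1 k = gsign [set (true, k)] [set (false, k)] *: gmono (pairset k).
Proof.
by rewrite /tau1 /psibar /psi gmul_mono pairsetE disjoints1 inE xpair_eqE.
Qed.

Lemma tau1C k F : gmul (tau1 k) F = gmul F (tau1 k).
Proof. by rewrite tau1E gmulZl gmulZr gmul_even_monoC // cards2. Qed.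

Lemma tau1_sq k : gmul (tau1 k) (tau1 k) = 0.
Proof.
rewrite tau1E gmulZl gmulZr gmul_mono.
case: ifP => [/disjointsP/(_ _ (psi_pairset k) (psi_pairset k)) [] | _].
by rewrite !scaler0.
Qed.

Lemma gexp_tau1 k t : gexp (t *: tau1 k) = gone + t *: tau1 k.
Proof.
rewrite /gexp gbigE.
have : (0 < #|{: gen V}|)%N by apply/card_gt0P; exists (true, k).
case: #|{: gen V}| => // n _; rewrite !big_ord_recl big1 => [|i _].
  by rewrite addr0 /bump /= gmul1r !gscaleE -[1`!]/1%N -[0`!]/1%N invr1 !scale1r.
have -> : nat_of_ord (lift ord0 (lift ord0 i)) = (2 + i)%N by [].
by rewrite iterD /= -gmulA gmulZl gmulZr tau1_sq !scaler0 gmul0l gscaleE scaler0.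
Qed.

Lemma tau_D1 A k : k \in A -> tau A = gmul (tau1 k) (tau (A :\ k)).
Proof.
move=> kA; rewrite !tauE [in RHS](eq_bigl (fun i => (i \in A) && (i != k))); last first.
  by move=> i; rewrite in_setD1 andbC.
have : k \in index_enum V := mem_index_enum k.
have : uniq (index_enum V) := index_enum_uniq V.
elim: (index_enum V) => // a r IHr /= /andP[ar ur]; rewrite inE !big_cons.
have [ka _ | ak kr] := eqVneq k a.
  subst a; rewrite kA andbF -big_filter -[in RHS]big_filter.
  congr (gmul _ (\big[_/_]_(i <- _) _)); apply: eq_in_filter => i ir.
  by rewrite (_ : i != k) ?andbT //; apply: contraNneq ar => <-.
rewrite (IHr ur kr) andbT; case: (a \in A); last by [].
by rewrite -gmulA (tau1C a) gmulA.
Qed.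

Definition avoids X F := forall U, F U != 0 -> [disjoint U & X].

Lemma gmul_support (P : pred {set gen V}) F G :
  (forall S T, F S != 0 -> G T != 0 -> [disjoint S & T] -> P (S :|: T)) ->
  forall U, gmul F G U != 0 -> P U.
Proof.
move=> FGP U; apply: contraR => nPU; rewrite ffunE big1 // => S _.
rewrite big1 // => T _; case: ifP => // /andP[ST /eqP STU].
have [-> | FS] := eqVneq (F S) 0; first by rewrite mulr0 mul0r.
have [-> | GT] := eqVneq (G T) 0; first by rewrite mulr0.
by move: (FGP S T FS GT ST); rewrite STU (negbTE nPU).
Qed.

Lemma avoids0 X : avoids X 0.
Proof. by move=> U; rewrite ffunE eqxx. Qed.

Lemma avoidsD X F G : avoids X F -> avoids X G -> avoids X (F + G).
Proof.
move=> XF XG U; rewrite coefD.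
by have [FU | /XF //] := eqVneq (F U) 0; rewrite FU add0r => /XG.
Qed.

Lemma avoidsZ X c F : avoids X F -> avoids X (c *: F).
Proof.
move=> XF U; rewrite coefZ.
by have [-> | /XF //] := eqVneq (F U) 0; rewrite mulr0 eqxx.
Qed.

Lemma avoids_sum X (I : Type) (r : seq I) (P : pred I) (Fi : I -> grass K V) :
  (forall x, P x -> avoids X (Fi x)) -> avoids X (\sum_(i <- r | P i) Fi i).
Proof. by apply: big_ind; [exact: avoids0 | exact: avoidsD]. Qed.

Lemma avoids_mul X F G : avoids X F -> avoids X G -> avoids X (gmul F G).
Proof. by move=> XF XG; apply: gmul_support => S T FS GT _; rewrite disjointsUl XF ?XG. Qed.

Lemma avoids_mono X S : [disjoint S & X] -> avoids X (gmono S).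
Proof. by move=> SX U; rewrite ffunE; have [-> | _] := eqVneq U S; rewrite ?eqxx. Qed.

Lemma avoids_gen b i k : i != k -> avoids (pairset k) (gmono [set (b, i)]).
Proof.
by move=> ik; apply: avoids_mono; rewrite disjoints1 !inE !xpair_eqE (negbTE ik) !andbF.
Qed.

Lemma tau_avoids A k : k \notin A -> avoids (pairset k) (tau A).
Proof.
move=> kA; rewrite tauE; apply: big_ind => [|F G|i iA]; first exact/avoids_mono/disjoint0s.
  exact: avoids_mul.
by apply: avoids_mul; apply: avoids_gen; apply: contraNneq kA => <-.
Qed.

Definition tau_del A : grass K V := \sum_(i in A) tau (A :\ i).

Definition hop A : grass K V :=
  \sum_(i in A) \sum_(j in A | j != i) gmul (gmul (psibar i) (psi j)) (tau (A :\ i :\ j)).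

Lemma fAE lam A : fA lam A = (lam * (1 - #|A|%:R)) *: tau A + tau_del A - hop A.
Proof. by rewrite /fA !gaddE !gscaleE scaleN1r. Qed.

Lemma fA_avoids lam A k : k \notin A -> avoids (pairset k) (fA lam A).
Proof.
have neq i : i \in A -> k \notin A -> i != k by move=> iA; apply: contraNneq => <-.
move=> kA; rewrite fAE; apply: avoidsD; last first.
  rewrite -scaleN1r; apply/avoidsZ/avoids_sum => i iA; apply: avoids_sum => j /andP[jA _].
  apply: avoids_mul; first by apply: avoids_mul; apply: avoids_gen; apply: neq.
  by apply: tau_avoids; rewrite !in_setD1 (negbTE kA) !andbF.
apply: avoidsD; first exact/avoidsZ/tau_avoids.
by apply: avoids_sum => i iA; apply: tau_avoids; rewrite in_setD1 (negbTE kA) andbF.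
Qed.

Lemma berezin1_is_linear k : linear (berezin1 k : grass K V -> grass K V).
Proof.
move=> c F G; rewrite /berezin1 !gbigE scaler_sumr -big_split; apply: eq_bigr => S _.
by rewrite !gscaleE coefD coefZ mulrDl -mulrA scalerDl scalerA.
Qed.

HB.instance Definition _ k :=
  GRing.isLinear.Build K (grass K V) (grass K V) _ (berezin1 k) (berezin1_is_linear k).

Lemma berezin1_eq0 k G :
  (forall U, G U != 0 -> ~~ (pairset k \subset U)) -> berezin1 k G = 0.
Proof.
move=> GU; rewrite /berezin1 gbigE big1 // => S kS.
have [-> | /GU] := eqVneq (G S) 0; first by rewrite mul0r gscaleE scale0r.
by rewrite kS.
Qed.

Lemma berezin1_tau1_mono k S : [disjoint S & pairset k] ->
  berezin1 k (gmul (tau1 k) (gmono S)) = gmono S.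
Proof.
move=> Sk.
have tau1S : gmul (tau1 k) (gmono S) =
    (gsign [set (true, k)] [set (false, k)] * gsign (pairset k) S) *:
      gmono (pairset k :|: S).
  by rewrite tau1E gmulZl gmul_mono disjoint_sym Sk scalerA.
rewrite /berezin1 gbigE (bigD1 (pairset k :|: S)) ?subsetUl //= big1 => [|U /andP[_ UkS]].
  rewrite addr0 setDUl setDv set0U (setDidPl Sk) -/(tau1 k) tau1S coefZ ffunE eqxx.
  by rewrite mulr1 gscaleE mulrACA !gsign_sq mulr1 scale1r.
by rewrite tau1S coefZ ffunE (negbTE UkS) mulr0 mul0r gscaleE scale0r.
Qed.

Lemma berezin1_tau1 k G : avoids (pairset k) G -> berezin1 k (gmul (tau1 k) G) = G.
Proof.
move=> kG; rewrite [in LHS](grass_expand G) gmul_sumr linear_sum [in RHS](grass_expand G).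
apply: eq_bigr => S _; rewrite gmulZr linearZZ.
have [-> | /kG Sk] := eqVneq (G S) 0; first by rewrite !scale0r.
by rewrite /= berezin1_tau1_mono.
Qed.

Definition berezin_at k t G := berezin1 k (gmul (gexp (t *: tau1 k)) G).

Lemma berezin_atE k t G :
  berezin_at k t G = berezin1 k G + t *: berezin1 k (gmul (tau1 k) G).
Proof. by rewrite /berezin_at gexp_tau1 gmulDl gmul1l gmulZl linearD linearZZ. Qed.

Lemma berezin_at_is_linear k t : linear (berezin_at k t).
Proof. by move=> c F G; rewrite /berezin_at gmulDr gmulZr linearPZ. Qed.

HB.instance Definition _ k t := GRing.isLinear.Build K (grass K V) (grass K V) _
  (berezin_at k t) (berezin_at_is_linear k t).

Lemma berezin_at_sum k t (I : Type) (r : seq I) (P : pred I) (Fi : I -> grass K V) :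
  berezin_at k t (\sum_(i <- r | P i) Fi i) = \sum_(i <- r | P i) berezin_at k t (Fi i).
Proof. exact: linear_sum. Qed.

Lemma berezin_at_avoids k t G : avoids (pairset k) G -> berezin_at k t G = t *: G.
Proof.
move=> kG; rewrite berezin_atE berezin1_tau1 // berezin1_eq0 ?add0r // => U /kG kU.
apply: contraTN kU => /subsetP/(_ _ (psi_pairset k)) kU.
by apply/negP => /disjointFl/(_ (psi_pairset k)); rewrite kU.
Qed.

Lemma berezin_at_tau1 k t G :
  avoids (pairset k) G -> berezin_at k t (gmul (tau1 k) G) = G.
Proof.
move=> kG; rewrite berezin_atE berezin1_tau1 // -gmulA tau1_sq gmul0l.
by rewrite linear0 scaler0 addr0.
Qed.

(* The monomials of G contain exactly one of psi_k, psibar_k: the integral kills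
   them, and their product with tau1 k vanishes as they share a generator. *)
Lemma berezin_at_eq0 k t G :
  (forall U, G U != 0 -> ~~ (pairset k \subset U) && ~~ [disjoint U & pairset k]) ->
  berezin_at k t G = 0.
Proof.
move=> GU; rewrite berezin_atE berezin1_eq0 => [|U /GU /andP[] //].
rewrite add0r (grass_expand G) gmul_sumr big1 ?linear0 ?scaler0 // => S _.
have [-> | /GU /andP[_ Sk]] := eqVneq (G S) 0; first by rewrite scale0r gmul0r.
by rewrite gmulZr tau1E gmulZl gmul_mono disjoint_sym (negbTE Sk) !scaler0.
Qed.

Lemma berezin_at_mono_eq0 k t S G x y : x \in pairset k -> y \in pairset k ->
  x \in S -> y \notin S -> avoids (pairset k) G ->
  berezin_at k t (gmul (gmono S) G) = 0.
Proof.
move=> xk yk xS yS kG; apply: berezin_at_eq0; apply: gmul_support => S' T.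
rewrite ffunE; have [-> _ /kG Tk _ | _] := eqVneq S' S; last by rewrite eqxx.
apply/andP; split.
  by apply: contraNN yS => /subsetP/(_ _ yk); rewrite inE (disjointFl Tk yk) orbF.
by apply/negP => /disjointsP/(_ x); rewrite inE xS; apply.
Qed.

Lemma berezin_at_psibar_vertex k t j G : j != k -> avoids (pairset k) G ->
  berezin_at k t (gmul (gmul (psibar k) (psi j)) G) = 0.
Proof.
move=> jk kG; rewrite /psibar /psi gmul_mono; case: ifP => _; last by rewrite gmul0l linear0.
rewrite gmulZl linearZZ /= (@berezin_at_mono_eq0 _ _ _ _ (true, k) (false, k)) ?scaler0 //.
- exact: psibar_pairset.
- exact: psi_pairset.
- by rewrite !inE eqxx.
by rewrite !inE !xpair_eqE /= [k == _]eq_sym (negbTE jk).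
Qed.

Lemma berezin_at_psi_vertex k t i G : i != k -> avoids (pairset k) G ->
  berezin_at k t (gmul (gmul (psibar i) (psi k)) G) = 0.
Proof.
move=> ik kG; rewrite /psibar /psi gmul_mono; case: ifP => _; last by rewrite gmul0l linear0.
rewrite gmulZl linearZZ /= (@berezin_at_mono_eq0 _ _ _ _ (false, k) (true, k)) ?scaler0 //.
- exact: psi_pairset.
- exact: psibar_pairset.
- by rewrite !inE eqxx orbT.
by rewrite !inE !xpair_eqE /= [k == _]eq_sym (negbTE ik).
Qed.

Lemma berezin_at_tau_in k t A : k \in A -> berezin_at k t (tau A) = tau (A :\ k).
Proof.
by move=> kA; rewrite (tau_D1 kA) berezin_at_tau1 //; apply: tau_avoids; rewrite setD11.
Qed.

Lemma berezin_at_tau_notin k t A : k \notin A -> berezin_at k t (tau A) = t *: tau A.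
Proof. by move=> kA; rewrite berezin_at_avoids //; apply: tau_avoids. Qed.

Lemma berezin_at_fA_notin k t lam A : k \notin A ->
  berezin_at k t (fA lam A) = t *: fA lam A.
Proof. by move=> kA; rewrite berezin_at_avoids //; apply: fA_avoids. Qed.

Lemma berezin_at_tau_del k t A : k \in A ->
  berezin_at k t (tau_del A) = t *: tau (A :\ k) + tau_del (A :\ k).
Proof.
move=> kA; rewrite /tau_del berezin_at_sum (big_setD1 _ kA).
rewrite berezin_at_tau_notin; last by rewrite setD11.
congr (_ + _); apply: eq_bigr => i /setD1P[ik iA].
by rewrite berezin_at_tau_in 1?setD1C // in_setD1 eq_sym ik.
Qed.

Lemma berezin_at_hop_term k t A i j : k \in A -> i != k -> j != k ->
  berezin_at k t (gmul (gmul (psibar i) (psi j)) (tau (A :\ i :\ j))) =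
  gmul (gmul (psibar i) (psi j)) (tau (A :\ k :\ i :\ j)).
Proof.
move=> kA ik jk; have kAij : k \in A :\ i :\ j by rewrite !in_setD1 kA !(eq_sym k) ik jk.
rewrite (tau_D1 kAij) -gmulA -tau1C gmulA berezin_at_tau1; last first.
  apply: avoids_mul; first by apply: avoids_mul; apply: avoids_gen.
  by apply: tau_avoids; rewrite setD11.
by rewrite [A :\ i :\ j :\ k]setD1C [A :\ i :\ k]setD1C.
Qed.

Lemma berezin_at_hop k t A : k \in A -> berezin_at k t (hop A) = hop (A :\ k).
Proof.
move=> kA; rewrite /hop berezin_at_sum (big_setD1 _ kA) berezin_at_sum.
rewrite big1 => [|j /andP[_ jk]].
  rewrite Monoid.simpm; apply: eq_bigr => i /setD1P[ik iA].
  rewrite berezin_at_sum (bigD1 k); last by rewrite kA eq_sym ik.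
  rewrite berezin_at_psi_vertex //; last by apply: tau_avoids; rewrite setD11.
  rewrite Monoid.simpm (eq_bigl (fun j => (j \in A :\ k) && (j != i))) => [|j]; last first.
    by rewrite in_setD1; case: (j != k); rewrite ?andbT ?andbF.
  by apply: eq_bigr => j /andP[/setD1P[jk _] _]; apply: berezin_at_hop_term.
by apply: berezin_at_psibar_vertex => //; apply: tau_avoids; rewrite setD1C setD11.
Qed.

Lemma berezin_at_fA_in k t lam A : k \in A ->
  berezin_at k t (fA lam A) = fA lam (A :\ k) + (t - lam) *: tau (A :\ k).
Proof.
move=> kA; rewrite !fAE !linearB linearD linearZZ /= berezin_at_tau_in //.
rewrite berezin_at_tau_del // berezin_at_hop // (cardsD1 k A) kA add1n -natr1.
apply/ffunP => U; rewrite !(coefD, coefN, coefZ); ring.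
Qed.

Lemma berezin_at_fold lam A (t : V -> K) (s : seq V) : uniq s ->
  foldr (fun i G => berezin_at i (t i) G) (fA lam A) s =
  (\prod_(i <- s | i \notin A) t i) *:
    (fA lam (A :\: [set x in s]) +
     (\sum_(i <- s | i \in A) (t i - lam)) *: tau (A :\: [set x in s])).
Proof.
elim: s => [_ | a s IHs /= /andP[aS us]].
  have -> : [set x in [::]] = set0 :> {set V} by apply/setP => x; rewrite !inE.
  by rewrite !big_nil scale0r addr0 scale1r setD0.
rewrite {}IHs // !big_cons linearZZ linearD linearZZ /=.
have -> : A :\: [set x in a :: s] = A :\: [set x in s] :\ a.
  by apply/setP => x; rewrite !inE negb_or andbA andbC.
set A' := A :\: [set x in s].
have [aA | aA] := boolP (a \in A).
  have aA' : a \in A' by rewrite !inE aA andbT.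
  rewrite berezin_at_fA_in // berezin_at_tau_in //.
  by apply/ffunP => U; rewrite !(coefD, coefZ); ring.
have aA' : a \notin A' by rewrite !inE negb_and aA orbT.
have -> : A' :\ a = A' by apply/setDidPl; rewrite disjoint_sym disjoints1.
rewrite berezin_at_fA_notin // berezin_at_tau_notin //.
by apply/ffunP => U; rewrite !(coefD, coefZ); ring.
Qed.

Lemma berezinD_fA (B : {set V}) (t : V -> K) lam A :
  berezinD B t (fA lam A) =
    (\prod_(i in B :\: A) t i) *:
      (fA lam (A :\: B) + (\sum_(i in B :&: A) (t i - lam)) *: tau (A :\: B)).
Proof.
have -> : berezinD B t (fA lam A) =
    foldr (fun i G => berezin_at i (t i) G) (fA lam A) (enum B) by [].
rewrite berezin_at_fold ?enum_uniq //.
have -> : [set x in enum B] = B by apply/setP => x; rewrite inE mem_enum.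
rewrite !big_enum_cond.
by congr (_ *: (_ + _ *: _)); apply: eq_bigl => i; rewrite !inE // andbC.
Qed.

Lemma berezinD_fA_self (t : V -> K) lam A :
  berezinD A t (fA lam A) = gconst (lam + \sum_(i in A) (t i - lam)).
Proof.
rewrite berezinD_fA setDv setIid big_set0 scale1r fAE /tau_del /hop !big_set0.
by rewrite tauE big_set0 cards0 !subr0 mulr1 addr0 /gconst gscaleE scalerDl.
Qed.

End Grassmann.

Theorem corollary5p2 (R : realType) (V : finType) (A B : {set V})
    (t : V -> R[i]) (lam : R[i]) :
  berezinD B t (fA lam A) =
    gscale (\prod_(i in B :\: A) t i)
      (gadd (fA lam (A :\: B))
            (gscale (\sum_(i in B :&: A) (t i - lam)) (tau (A :\: B))))
  /\ berezinD A t (fA lam A) = gconst (lam + \sum_(i in A) (t i - lam)).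
Proof. by split; [exact: berezinD_fA | exact: berezinD_fA_self]. Qed.
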